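(* Let $\Pi_q$ be a projective plane (not necessarily Desarguesian) of order $q$, let $\mu\ge 2$ be an integer and let $\delta=1/\sqrt{(q+1)\ln(q+1)}$. (i) Define $D_1=1$ and $D_i=D_{i-1}+1+\frac{D_{i-1}+\delta}{q}+\delta$ for $i=2,3,\dots,\mu$. Then $\Pi_q$ contains a $(1,\mu)$-saturating set of size $k\le 2D_\mu\sqrt{(q+1)\ln(q+1)}+2$. (ii) If $\mu\le\sqrt{q}$, then $\Pi_q$ contains a $(1,\mu)$-saturating set of size $k\le 2(\mu+1)\sqrt{(q+1)\ln(q+1)}+2$. (iii) If $\mu\le \frac{(1-\delta)q-\delta+1}{2}+1$, then $\Pi_q$ contains a $(1,\mu)$-saturating set of size $k\le 2(2\mu-1)\sqrt{(q+1)\ln(q+1)}+2$.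
   Context: A point set $S\subset\Pi_q$ is $(1,\mu)$-saturating if for every point $Q\in\Pi_q\setminus S$ the number of secants of $S$ through $Q$, counted with multiplicity, is at least $\mu$, where a line $\ell$ meeting $S$ in at least two points is a secant and has multiplicity $\binom{\#(\ell\cap S)}{2}$. Here $\ln$ is the natural logarithm. *)

From Stdlib Require Import Reals.
From mathcomp Require Import all_boot.
Set Implicit Arguments.
Unset Strict Implicit.
Unset Printing Implicit Defensive.

Section Plane.
Variables (P L : finType) (inc : P -> L -> bool).

Definition collinear (x y z : P) : bool :=
  [exists l : L, [&& inc x l, inc y l & inc z l]].

Record projective_plane (q : nat) : Prop := {
  pp_line_size : forall l : L, #|[set x | inc x l]| = q.+1;
  pp_point_deg : forall x : P, #|[set l | inc x l]| = q.+1;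
  pp_two_points : forall x y : P, x != y -> exists! l : L, inc x l && inc y l;
  pp_two_lines : forall l m : L, l != m -> exists! x : P, inc x l && inc x m;
  pp_nondeg : exists a b c d : P,
    [/\ uniq [:: a; b; c; d],
        ~~ collinear a b c, ~~ collinear a b d,
        ~~ collinear a c d & ~~ collinear b c d]
}.

Definition line_pts (S : {set P}) (l : L) : nat := #|[set x in S | inc x l]|.

(* number of secants of S through Q, counted with multiplicity C(#(l cap S),2) *)
Definition secant_count (S : {set P}) (Q : P) : nat :=
  (\sum_(l : L | inc Q l && (2 <= line_pts S l)) 'C(line_pts S l, 2))%N.

Definition saturating (mu : nat) (S : {set P}) : Prop :=
  forall Q : P, Q \notin S -> mu <= secant_count S Q.
End Plane.

Open Scope R_scope.

Definition delta (q : nat) : R := 1 / sqrt ((INR q + 1) * ln (INR q + 1)).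

(* Dseq q i = D_i for i >= 1 (D_0 is an unused dummy value). *)
Fixpoint Dseq (q : nat) (i : nat) : R :=
  match i with
  | O => 1
  | S O => 1
  | S j => Dseq q j + 1 + (Dseq q j + delta q) / INR q + delta q
  end.

From Stdlib Require Import Reals Lra Psatz.
From mathcomp Require Import all_boot zify.
Set Implicit Arguments.
Unset Strict Implicit.
Unset Printing Implicit Defensive.

(* Greedy construction with the potential
     Phi(S) = sum over Q outside S of max(0, mu - #secants of S through Q).
   Adding a point x to S lowers Phi by at least the number of points Q with
   positive defect that x reaches, i.e. x = Q or x lies on a line through Q
   meeting S.  Counting along the pencil of lines through such a Q shows that
   at least 1 + q|S| - q(mu - 1) - |S| points outside S reach it, so the best
   x gives Phi(S + x) <= Phi(S) (1 - r / (mu |Pi_q|)).  After 2(mu - 1)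
   steps the rate at the k-th further step is r >= 1 + (q - 1) k,
   so after about 2 mu sqrt((q+1) ln(q+1)) steps Phi < 2; adding the at most
   one remaining defective point gives a (1,mu)-saturating set of size at most
   2 mu (sqrt((q+1) ln(q+1)) + 1), which implies all three bounds. *)

Open Scope R_scope.

Lemma ln_le_compat x y : 0 < x -> x <= y -> ln x <= ln y.
Proof.
move=> x_gt0 /Rle_lt_or_eq_dec [lt_xy | ->]; last exact: Rle_refl.
exact/Rlt_le/ln_increasing.
Qed.

Lemma ln_le_sub1 y : 0 < y -> ln y <= y - 1.
Proof. by move=> y_gt0; have := exp_ineq1_le (ln y); rewrite exp_ln //; lra. Qed.

Lemma one_le_ln_succ (q : nat) : (2 <= q)%N -> 1 <= ln (INR q + 1).
Proof.
move=> q_ge2; rewrite -{1}(ln_exp 1); apply: ln_le_compat; first exact: exp_pos.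
have := exp_le_3; have : INR 2 <= INR q by apply/le_INR/leP.
rewrite /=; lra.
Qed.

Lemma le_qlnq (q : nat) : (2 <= q)%N -> INR q + 1 <= (INR q + 1) * ln (INR q + 1).
Proof.
move=> q_ge2; have := one_le_ln_succ q_ge2; have := pos_INR q; nra.
Qed.

Lemma exists_nat_ceil x : 0 <= x -> exists K : nat, x <= INR K <= x + 1.
Proof.
move=> x_ge0; have [up_gt up_le] := archimed x.
have up_ge0 : (0 <= up x)%Z by apply: le_IZR; lra.
exists (Z.to_nat (up x)); rewrite INR_IZR_INZ Znat.Z2Nat.id //; lra.
Qed.

Lemma decay_step a b r M : 0 < M -> 0 <= b -> a * M + b * r <= b * M ->
  a <= b * exp (- r / M).
Proof.
move=> M_gt0 b_ge0 h; apply: (Rle_trans _ (b * (1 - r / M))).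
  apply: (Rmult_le_reg_r M) => //.
  have -> : b * (1 - r / M) * M = b * M - b * r by field; lra.
  lra.
apply: Rmult_le_compat_l => //; have := exp_ineq1_le (- r / M).
have -> : - r / M = - (r / M) by field; lra.
lra.
Qed.

(* [greedy_gain c k] is [sum_(j < k) (1 + c j)]. *)
Definition greedy_gain (c x : R) : R := x + c * x * (x - 1) / 2.

Lemma greedy_gainS c (k : nat) :
  greedy_gain c (INR k.+1) = greedy_gain c (INR k) + (1 + c * INR k).
Proof. by rewrite /greedy_gain S_INR; field. Qed.

Lemma greedy_gain_le c x y : 0 <= c -> 1 <= x -> x <= y ->
  greedy_gain c x <= greedy_gain c y.
Proof.
move=> c_ge0 x_ge1 le_xy; rewrite /greedy_gain.
have -> : y + c * y * (y - 1) / 2 =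
  x + c * x * (x - 1) / 2 + (y - x) * (1 + c * (y + x - 1) / 2) by field.
have : 0 <= c * (y + x - 1) by apply: Rmult_le_pos; lra.
have : 0 <= y - x by lra.
nra.
Qed.

Lemma greedy_gain_key (q mu L s : R) : 3 <= q -> 2 <= mu -> 1 <= L ->
  0 <= s -> s * s = (q + 1) * L ->
  mu * (q * q + q + 1) * (2 * L + mu / 2 - 1) < greedy_gain (q - 1) (2 * mu * s).
Proof.
move=> q_ge3 mu_ge2 L_ge1 s_ge0 s2.
have s_ge1 : 1 <= s by nra.
have s_le : s <= (q + 1) * L by nra.
have -> : greedy_gain (q - 1) (2 * mu * s) =
  mu * (2 * (q * q - 1) * mu * L - (q - 3) * s).
  rewrite /greedy_gain.
  have -> : (q - 1) * (2 * mu * s) * (2 * mu * s - 1) / 2 =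
    2 * (q - 1) * mu * mu * (s * s) - (q - 1) * mu * s by field.
  rewrite s2; ring.
rewrite Rmult_assoc; apply: Rmult_lt_compat_l; first lra.
have h1 : (q - 3) * s <= (q - 3) * ((q + 1) * L) by apply: Rmult_le_compat_l; lra.
have h2 : 0 <= (q * q - 3) * (L - 1) by apply: Rmult_le_pos; nra.
have h3 : 0 <= 2 * (mu - 2) * (q * q - 1) * (L - 1).
  apply: Rmult_le_pos; last lra; apply: Rmult_le_pos; nra.
have h4 : 0 <= (mu - 2) * (2 * (q * q - 1) - (q * q + q + 1) / 2).
  apply: Rmult_le_pos; nra.
nra.
Qed.

Lemma decay_lt2 (q mu K : R) : 3 <= q -> 2 <= mu ->
  2 * mu * sqrt ((q + 1) * ln (q + 1)) <= K ->
  mu * (q * q + q + 1) * exp (- greedy_gain (q - 1) K / (mu * (q * q + q + 1))) < 2.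
Proof.
move=> q_ge3 mu_ge2 le_xK.
set L := ln (q + 1); set s := sqrt ((q + 1) * L); set N := q * q + q + 1.
have L_ge1 : 1 <= L.
  rewrite /L -{1}(ln_exp 1); apply: ln_le_compat; first exact: exp_pos.
  have := exp_le_3; lra.
have s_ge0 : 0 <= s := sqrt_pos _.
have s2 : s * s = (q + 1) * L by rewrite /s sqrt_sqrt //; nra.
have N_gt0 : 0 < N by rewrite /N; nra.
have M_gt0 : 0 < mu * N by nra.
have ln_M : ln (mu * N / 2) <= 2 * L + mu / 2 - 1.
  have -> : mu * N / 2 = mu / 2 * N by field.
  rewrite ln_mult; [|lra|lra].
  have : ln (mu / 2) <= mu / 2 - 1 by apply: ln_le_sub1; lra.
  have : ln N <= 2 * L.
    have -> : 2 * L = ln ((q + 1) * (q + 1)) by rewrite ln_mult /L; lra.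
    by apply: ln_le_compat => //; rewrite /N; nra.
  lra.
have gain_gt : mu * N * ln (mu * N / 2) < greedy_gain (q - 1) K.
  apply: (Rle_lt_trans _ (mu * N * (2 * L + mu / 2 - 1))).
    exact: Rmult_le_compat_l (Rlt_le _ _ M_gt0) ln_M.
  apply: (Rlt_le_trans _ _ _ (greedy_gain_key q_ge3 mu_ge2 L_ge1 s_ge0 s2)).
  have s_ge1 : 1 <= s by nra.
  apply: greedy_gain_le => //; nra.
have : exp (- greedy_gain (q - 1) K / (mu * N)) < exp (- ln (mu * N / 2)).
  apply: exp_increasing; apply: (Rmult_lt_reg_r (mu * N)) => //.
  have -> : - greedy_gain (q - 1) K / (mu * N) * (mu * N) = - greedy_gain (q - 1) K.
    by field; lra.
  lra.
rewrite exp_Ropp exp_ln; last lra.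
move=> h; apply: (Rlt_le_trans _ (mu * N * / (mu * N / 2))).
  exact: Rmult_lt_compat_l.
by right; field; lra.
Qed.

Lemma leq_mul_bin2 (q m : nat) : (m <= q)%N ->
  (q * m <= (if 0 < m then q - m else 0) + q * 'C(m, 2) + m)%N.
Proof.
case: m => [|m] le_mq /=; first by rewrite muln0.
have : (m <= 'C(m.+1, 2))%N by rewrite binS bin1 leq_addl.
nia.
Qed.

Section ProjectivePlane.
Variables (P L : finType) (inc : P -> L -> bool) (q : nat).
Hypothesis plane : projective_plane inc q.
Local Open Scope nat_scope.

Lemma card_lines_through2 (x y : P) : x != y ->
  #|[set l | inc x l && inc y l]| = 1.
Proof.
move=> neq_xy; have [l [xyl l_uniq]] := pp_two_points plane neq_xy.
apply/eqP/cards1P; exists l; apply/setP => l'; rewrite !inE.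
by apply/idP/eqP => [/l_uniq <- | ->].
Qed.

Lemma sum_pencil (Q : P) (F : P -> nat) :
  \sum_(x | x != Q) F x = \sum_(l | inc Q l) \sum_(x | (x != Q) && inc x l) F x.
Proof.
under [RHS]eq_bigr do rewrite big_mkcondr.
rewrite exchange_big; apply: eq_bigr => x neq_xQ.
rewrite -big_mkcondr /= sum_nat_const.
rewrite (_ : #|_| = #|[set l | inc x l && inc Q l]|); last first.
  by apply: eq_card => l; rewrite !inE andbC.
by rewrite card_lines_through2 // mul1n.
Qed.

Lemma line_ptsE (S : {set P}) l :
  line_pts inc S l = \sum_(x | (x \in S) && inc x l) 1.
Proof. by rewrite sum1dep_card. Qed.

Lemma sum1_punctured_line (Q : P) l :
  inc Q l -> \sum_(x | (x != Q) && inc x l) 1 = q.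
Proof.
move=> Ql; have /eqP := pp_line_size plane l.
rewrite -sum1dep_card (bigD1 Q) //= eqSS => /eqP <-.
by apply: eq_bigl => x; rewrite andbC.
Qed.

Lemma card_points : #|P| = q.+1 * q + 1.
Proof.
have [Q _] := pp_nondeg plane.
rewrite -sum1_card (bigD1 Q) //= addnC sum_pencil.
rewrite (eq_bigr (fun _ => q)); last by move=> l; exact: sum1_punctured_line.
rewrite sum_nat_const -(pp_point_deg plane Q); congr (_ * _ + _).
by apply: eq_card => l; rewrite !inE.
Qed.

Lemma order_ge2 : 2 <= q.
Proof.
have [a [b [c [d [uniq_abcd n_abc n_abd n_acd _]]]]] := pp_nondeg plane.
move: uniq_abcd; rewrite /= !inE !negb_or => /andP [/and3P [ab ac ad] _].
have [l1 [/andP [al1 bl1] _]] := pp_two_points plane ab.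
have [l2 [/andP [al2 cl2] _]] := pp_two_points plane ac.
have [l3 [/andP [al3 dl3] _]] := pp_two_points plane ad.
have collinear_via l x y z : inc x l -> inc y l -> inc z l -> collinear inc x y z.
  by move=> xl yl zl; apply/existsP; exists l; rewrite xl yl zl.
have n12 : l1 != l2 by apply: contraNneq n_abc => E; rewrite (collinear_via l1) // E.
have n13 : l1 != l3 by apply: contraNneq n_abd => E; rewrite (collinear_via l1) // E.
have n23 : l2 != l3 by apply: contraNneq n_acd => E; rewrite (collinear_via l2) // E.
have : #|l3 |: [set l1; l2]| <= #|[set l | inc a l]|.
  by apply/subset_leq_card/subsetP => l; rewrite !inE => /orP [|/orP []] /eqP ->.
by rewrite (pp_point_deg plane) cardsU1 cards2 n12 !inE negb_or !(eq_sym l3) n13 n23.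
Qed.

Lemma card_pencil (S : {set P}) (Q : P) : Q \notin S ->
  #|S| = \sum_(l | inc Q l) line_pts inc S l.
Proof.
move=> QS; rewrite -sum1_card big_mkcond (bigD1 Q) //= (negbTE QS) add0n.
rewrite sum_pencil; apply: eq_bigr => l Ql.
rewrite line_ptsE [RHS]big_mkcondl [RHS](bigD1 Q) //= (negbTE QS) add0n.
by apply: eq_bigl => x; rewrite andbC.
Qed.

Lemma line_pts_le (S : {set P}) (Q : P) l : Q \notin S -> inc Q l ->
  line_pts inc S l <= q.
Proof.
move=> QS Ql; rewrite line_ptsE -(sum1_punctured_line Ql) big_mkcond [leqRHS]big_mkcond.
apply: leq_sum => x _; case xS: (x \in S); case: (inc x l) => //=.
by case: eqP xS QS => // -> ->.
Qed.

Lemma line_pts_subset (S S' : {set P}) l : S \subset S' ->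
  line_pts inc S l <= line_pts inc S' l.
Proof.
move=> sub_SS'; apply/subset_leq_card/subsetP => x; rewrite !inE.
by case/andP => /(subsetP sub_SS') -> ->.
Qed.

Lemma line_pts_setU1 (S : {set P}) x l : x \notin S -> inc x l ->
  line_pts inc (x |: S) l = (line_pts inc S l).+1.
Proof.
move=> xS xl; rewrite /line_pts.
rewrite (_ : [set y in x |: S | inc y l] = x |: [set y in S | inc y l]).
  by rewrite cardsU1 inE (negbTE xS).
by apply/setP => y; rewrite !inE; case: eqP => // ->; rewrite xl.
Qed.

Lemma secant_countE (S : {set P}) (Q : P) :
  secant_count inc S Q = \sum_(l | inc Q l) 'C(line_pts inc S l, 2).
Proof.
rewrite /secant_count [RHS](bigID (fun l => 2 <= line_pts inc S l)) /=.
rewrite [X in _ = _ + X]big1 ?addn0 // => l /andP [_].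
by rewrite -ltnNge => /bin_small.
Qed.

Lemma secant_count_subset (S S' : {set P}) Q : S \subset S' ->
  secant_count inc S Q <= secant_count inc S' Q.
Proof.
move=> sub_SS'; rewrite !secant_countE; apply: leq_sum => l _.
exact/leq_bin2l/line_pts_subset.
Qed.

Lemma secant_count_setU1_lt (S : {set P}) x Q l :
  x \notin S -> inc Q l -> inc x l -> 0 < line_pts inc S l ->
  secant_count inc S Q < secant_count inc (x |: S) Q.
Proof.
move=> xS Ql xl l_meets_S; rewrite !secant_countE (bigD1 l) // [ltnRHS](bigD1 l) //=.
rewrite line_pts_setU1 // binS bin1 -addnA ltn_add2l.
rewrite -[X in X < _]add0n -addSn leq_add //.
apply: leq_sum => l' _; exact/leq_bin2l/line_pts_subset/subsetUr.
Qed.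

(* Truncated subtraction: only points on fewer than [mu] secants contribute. *)
Definition deficiency (mu : nat) (S : {set P}) : nat :=
  \sum_(Q | Q \notin S) (mu - secant_count inc S Q).

Definition unsaturated (mu : nat) (S : {set P}) (Q : P) : bool :=
  (Q \notin S) && (secant_count inc S Q < mu).

(* Adding [x] to [S] either puts [Q] into [S] or lengthens a secant through [Q]. *)
Definition reaches (S : {set P}) (Q x : P) : bool :=
  (x == Q) || [exists l, [&& inc Q l, inc x l & 0 < line_pts inc S l]].

Lemma deficiency_setU1 mu (S : {set P}) x : x \notin S ->
  deficiency mu (x |: S) + \sum_(Q | unsaturated mu S Q) reaches S Q x
    <= deficiency mu S.
Proof.
move=> xS; rewrite /deficiency big_mkcondr /=.
rewrite (eq_bigl (fun Q => (Q \notin S) && (Q != x))); last first.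
  by move=> Q; rewrite !inE negb_or andbC.
rewrite big_mkcondr -big_split /=; apply: leq_sum => Q QS.
have le_sec := secant_count_subset Q (subsetUr [set x] S).
case: eqP => [-> | /eqP neq_Qx] /=.
  by case: ltnP => // lt_sec; rewrite /reaches eqxx subn_gt0.
case: ltnP => [lt_sec | _]; last by rewrite addn0 leq_sub2l.
rewrite /reaches eq_sym (negbTE neq_Qx) /=.
case: existsP => [[l /and3P [Ql xl l_meets_S]] | _]; last by rewrite addn0 leq_sub2l.
have := secant_count_setU1_lt xS Ql xl l_meets_S; lia.
Qed.

Lemma sum_punctured_line_outside (S : {set P}) (Q : P) l : Q \notin S -> inc Q l ->
  \sum_(x | (x \notin S) && (x != Q)) (inc x l : nat) = q - line_pts inc S l.
Proof.
move=> QS Ql; symmetry.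
rewrite -(sum1_punctured_line Ql) [X in X - _](bigID (fun x => x \in S)) /=.
have -> : \sum_(x | ((x != Q) && inc x l) && (x \in S)) 1 = line_pts inc S l.
  rewrite line_ptsE; apply: eq_bigl => x.
  by case: eqP => [-> | _]; rewrite ?(negbTE QS) ?andbF // andbC.
rewrite addKn [LHS]big_mkcond [RHS]big_mkcond; apply: eq_bigr => x _.
by case: (x \in S); case: (x == Q); case: (inc x l).
Qed.

Lemma sum_lines_through2_le_reaches (S : {set P}) (Q x : P) : x != Q ->
  \sum_(l | inc Q l) (inc x l && (0 < line_pts inc S l) : nat) <= reaches S Q x.
Proof.
move=> neq_xQ; rewrite /reaches (negbTE neq_xQ) /=.
case: existsP => [_ | no_line]; last first.
  rewrite big1 // => l Ql; apply/eqP; rewrite eqb0; apply/negP => /andP [xl l_meets_S].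
  by apply: no_line; exists l; rewrite Ql xl l_meets_S.
apply: (@leq_trans (\sum_(l | inc Q l && inc x l) 1)).
  by rewrite [leqRHS]big_mkcondr; apply: leq_sum => l _; case: (inc x l); case: (0 < _).
rewrite sum1dep_card (_ : [set l | _] = [set l | inc x l && inc Q l]).
  by rewrite card_lines_through2.
by apply/setP => l; rewrite !inE andbC.
Qed.

Lemma sum_pencil_le_reaches (S : {set P}) (Q : P) : Q \notin S ->
  \sum_(l | inc Q l) (if 0 < line_pts inc S l then q - line_pts inc S l else 0)
    <= \sum_(x | (x \notin S) && (x != Q)) reaches S Q x.
Proof.
move=> QS; apply: (@leq_trans (\sum_(x | (x \notin S) && (x != Q))
    \sum_(l | inc Q l) (inc x l && (0 < line_pts inc S l) : nat))).
  rewrite exchange_big; apply/eq_leq/eq_bigr => l Ql.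
  case: ltnP => _; last by rewrite big1 // => x _; rewrite andbF.
  by rewrite -(sum_punctured_line_outside QS Ql); apply: eq_bigr => x _; rewrite andbT.
by apply: leq_sum => x /andP [_]; apply: sum_lines_through2_le_reaches.
Qed.

Lemma card_reaches (S : {set P}) (Q : P) : Q \notin S ->
  1 + q * #|S| <= \sum_(x | x \notin S) reaches S Q x + q * secant_count inc S Q + #|S|.
Proof.
move=> QS; rewrite (bigD1 Q) //= /reaches eqxx -!addnA leq_add2l.
rewrite (card_pencil QS) secant_countE !big_distrr -!big_split /=.
apply: leq_trans (leq_add (sum_pencil_le_reaches QS) (leqnn _)).
rewrite -big_split /=; apply: leq_sum => l Ql; rewrite addnA.
exact/leq_mul_bin2/(line_pts_le QS).
Qed.

Lemma deficiency_le_unsaturated mu (S : {set P}) :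
  deficiency mu S <= mu * #|[pred Q | unsaturated mu S Q]|.
Proof.
rewrite /deficiency (bigID (fun Q => secant_count inc S Q < mu)) /=.
rewrite [X in _ + X]big1 ?addn0 => [|Q /andP [_]]; last first.
  by rewrite -leqNgt -subn_eq0 => /eqP.
rewrite -sum1_card big_distrr /=; apply: leq_sum => Q _.
by rewrite muln1 leq_subr.
Qed.

Lemma sum_reaches_ge mu (S : {set P}) :
  #|[pred Q | unsaturated mu S Q]| * (1 + q * #|S| - (q * (mu - 1) + #|S|))
    <= \sum_(x | x \notin S) \sum_(Q | unsaturated mu S Q) reaches S Q x.
Proof.
rewrite exchange_big -(sum1_card [pred Q | unsaturated mu S Q]) big_distrl /=.
apply: leq_sum => Q /andP [QS lt_sec].
have := card_reaches QS.
have : q * secant_count inc S Q <= q * (mu - 1) by rewrite leq_mul2l; lia.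
lia.
Qed.

Lemma greedy_step mu (S : {set P}) : 0 < deficiency mu S -> exists2 x, x \notin S &
  deficiency mu (x |: S) * (mu * #|P|) +
  deficiency mu S * (1 + q * #|S| - (q * (mu - 1) + #|S|))
    <= deficiency mu S * (mu * #|P|).
Proof.
move=> def_gt0.
set r := _ - _; set D := fun x => \sum_(Q | unsaturated mu S Q) reaches S Q x.
have [Q0 Q0S] : exists2 Q0, Q0 \notin S & secant_count inc S Q0 < mu.
  move: def_gt0; rewrite lt0n sum_nat_eq0 => /forallPn [Q0].
  by rewrite negb_imply -lt0n subn_gt0 => /andP []; exists Q0.
have [x xS D_max] := @arg_maxnP _ Q0 (fun x => x \notin S) D Q0S.
exists x => //.
have D_sum : \sum_(y | y \notin S) D y <= #|P| * D x.
  apply: (@leq_trans (\sum_(y | y \notin S) D x)); first exact: leq_sum D_max.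
  by rewrite sum_nat_const leq_mul2r max_card orbT.
have def_r : deficiency mu S * r <= mu * #|P| * D x.
  apply: (leq_trans (leq_mul (deficiency_le_unsaturated mu S) (leqnn r))).
  rewrite -mulnA -mulnA leq_mul2l (leq_trans (sum_reaches_ge mu S)) ?orbT //.
have := leq_mul (deficiency_setU1 mu xS) (leqnn (mu * #|P|)).
rewrite -/(D x) mulnDl (mulnC (D x)); lia.
Qed.

Lemma deficiency_le mu (S : {set P}) : deficiency mu S <= mu * #|P|.
Proof.
rewrite /deficiency mulnC -sum1_card big_distrl /=.
rewrite [leqRHS](bigID (fun Q => Q \notin S)) /= -[leqLHS]addn0 leq_add //.
by apply: leq_sum => Q _; rewrite mul1n leq_subr.
Qed.

Lemma saturating_completion mu (S : {set P}) :
  exists2 S', saturating inc mu S' & #|S'| <= #|S| + deficiency mu S.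
Proof.
set U := [set Q | unsaturated mu S Q].
exists (S :|: U).
  move=> Q; rewrite in_setU negb_or inE => /andP [QS].
  rewrite /unsaturated QS -leqNgt => le_mu_sec.
  exact: leq_trans le_mu_sec (secant_count_subset Q (subsetUl S U)).
apply: (leq_trans (leq_card_setU _ _)); rewrite leq_add2l.
rewrite -sum1_card /deficiency [leqRHS](bigID (fun Q => secant_count inc S Q < mu)) /=.
apply: leq_trans (leq_addr _ _).
rewrite (eq_bigl (fun Q => unsaturated mu S Q)) => [|Q]; last by rewrite inE.
by apply: leq_sum => Q /andP [_]; rewrite subn_gt0.
Qed.

Lemma exists_card_or_deficiency0 mu n : exists S : {set P},
  (#|S| = n \/ deficiency mu S = 0) /\ #|S| <= n.
Proof.
elim: n => [|n [S [card_S le_S]]]; first by exists set0; rewrite cards0; split; [left|].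
have [def0 | def_gt0] := posnP (deficiency mu S).
  by exists S; split; [right | apply: leqW].
have [x xS _] := greedy_step def_gt0.
exists (x |: S); rewrite cardsU1 xS.
by case: card_S => [-> | def0]; [split; [left|] | rewrite def0 in def_gt0].
Qed.

Local Open Scope R_scope.

Lemma greedy_step_decay mu k (S : {set P}) : (0 < mu)%N ->
  #|S| = (2 * (mu - 1) + k)%N -> (0 < deficiency mu S)%N ->
  exists2 x, x \notin S & INR (deficiency mu (x |: S)) <=
    INR (deficiency mu S) * exp (- (1 + (INR q - 1) * INR k) / INR (mu * #|P|)).
Proof.
move=> mu_gt0 card_S def_gt0; have [x xS step] := greedy_step def_gt0.
exists x => //.
have q_ge2 := order_ge2.
have gain_ge : (1 + (q - 1) * k <= 1 + q * #|S| - (q * (mu - 1) + #|S|))%N.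
  rewrite card_S; nia.
have {}step : (deficiency mu (x |: S) * (mu * #|P|) +
    deficiency mu S * (1 + (q - 1) * k) <= deficiency mu S * (mu * #|P|))%N.
  by apply: leq_trans step; rewrite leq_add2l leq_mul2l gain_ge orbT.
have M_gt0 : 0 < INR (mu * #|P|).
  by apply/lt_0_INR/ltP; rewrite muln_gt0 mu_gt0 card_points addn1.
have -> : 1 + (INR q - 1) * INR k = INR (1 + (q - 1) * k).
  by rewrite plus_INR mult_INR minus_INR; [rewrite INR_1 | apply/leP; lia].
apply: (decay_step M_gt0 (pos_INR _)).
by rewrite -!mult_INR -plus_INR; apply/le_INR/leP.
Qed.

Lemma greedy_decay mu k : (0 < mu)%N -> exists S : {set P},
  [/\ #|S| = (2 * (mu - 1) + k)%N \/ deficiency mu S = 0%N,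
      (#|S| <= 2 * (mu - 1) + k)%N &
      INR (deficiency mu S) <= INR (mu * #|P|) *
        exp (- greedy_gain (INR q - 1) (INR k) / INR (mu * #|P|))].
Proof.
move=> mu_gt0; set M := INR (mu * #|P|).
have M_gt0 : 0 < M by apply/lt_0_INR/ltP; rewrite muln_gt0 mu_gt0 card_points addn1.
elim: k => [|k [S [card_S le_S decay]]].
  have [S [card_S le_S]] := exists_card_or_deficiency0 mu (2 * (mu - 1)).
  exists S; rewrite addn0; split => //.
  rewrite (_ : - _ / M = 0); last by rewrite /greedy_gain /=; field; lra.
  by rewrite exp_0 Rmult_1_r; apply/le_INR/leP/deficiency_le.
have [def0 | def_gt0] := posnP (deficiency mu S).
  exists S; split; [by right | by rewrite addnS leqW |].
  by rewrite def0; apply/Rlt_le/Rmult_lt_0_compat => //; exact: exp_pos.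
have {}card_S : #|S| = (2 * (mu - 1) + k)%N.
  by case: card_S => // def0; rewrite def0 in def_gt0.
have [x xS step] := greedy_step_decay mu_gt0 card_S def_gt0.
exists (x |: S); rewrite cardsU1 xS card_S addnS; split => //; first by left.
apply: (Rle_trans _ _ _ step).
apply: (Rle_trans _ (M * exp (- greedy_gain (INR q - 1) (INR k) / M) *
                     exp (- (1 + (INR q - 1) * INR k) / M))).
  by apply: Rmult_le_compat_r => //; exact/Rlt_le/exp_pos.
rewrite Rmult_assoc -exp_plus greedy_gainS; apply: Req_le; congr (_ * exp _).
by field; lra.
Qed.

Lemma small_saturating_set mu : (2 <= mu)%N -> exists2 S : {set P},
  saturating inc mu S &
  INR #|S| <= 2 * INR mu * (sqrt ((INR q + 1) * ln (INR q + 1)) + 1).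
Proof.
move=> mu_ge2; set s := sqrt _.
have q_ge2 := order_ge2.
have mu_ge2R : 2 <= INR mu by apply/(le_INR 2)/leP.
have s_ge1 : 1 <= s.
  by rewrite -sqrt_1; apply: sqrt_le_1_alt; have := le_qlnq q_ge2; have := pos_INR q; lra.
have card_P : INR #|P| = INR q * INR q + INR q + 1.
  by rewrite card_points plus_INR mult_INR S_INR INR_1; ring.
have [q_ge3 | q_lt3] := leqP 3 q; last first.
  have q2 : q = 2%N by lia.
  (* the whole plane has only 7 points *)
  exists setT => [Q|]; first by rewrite in_setT.
  by rewrite cardsT card_P q2 /=; nra.
have [K [le_xK le_Kx]] := exists_nat_ceil (ltac:(nra) : 0 <= 2 * INR mu * s).
have [S [_ le_S decay]] := greedy_decay K (ltnW mu_ge2).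
have def_le1 : (deficiency mu S <= 1)%N.
  suff : INR (deficiency mu S) < INR 2 by move/INR_lt/ltP.
  apply: (Rle_lt_trans _ _ _ decay); rewrite mult_INR card_P.
  apply: decay_lt2 => //; have := le_INR 3 q (elimT leP q_ge3); rewrite /=; lra.
have [S' sat_S' card_S'] := saturating_completion mu S.
exists S' => //.
have : (#|S'| + 1 <= mu + mu + K)%N by lia.
move/leP/le_INR; rewrite !plus_INR INR_1; nra.
Qed.

End ProjectivePlane.

Lemma Rinv_ge0 x : 0 <= x -> 0 <= / x.
Proof.
case/Rle_lt_or_eq_dec => [x_gt0 | <-]; last by rewrite Rinv_0; exact: Rle_refl.
exact/Rlt_le/Rinv_0_lt_compat.
Qed.

Lemma delta_ge0 q : 0 <= delta q.
Proof. by rewrite /delta; apply: Rmult_le_pos; [lra | apply/Rinv_ge0/sqrt_pos]. Qed.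

Lemma Dseq_ge (q i : nat) : (1 <= i)%N -> INR i + (INR i - 1) * delta q <= Dseq q i.
Proof.
have d_ge0 := delta_ge0 q.
elim: i => [//|[|i] IH] _; first by rewrite /=; lra.
have {}IH := IH isT; rewrite [Dseq q i.+2]/= -/(Dseq q i.+1) S_INR.
have : 0 <= (Dseq q i.+1 + delta q) / INR q.
  apply: Rmult_le_pos; last exact/Rinv_ge0/pos_INR.
  have := pos_INR i; rewrite S_INR in IH; nra.
lra.
Qed.

Theorem corollary3 (P L : finType) (inc : P -> L -> bool) (q mu : nat) :
  projective_plane inc q -> (2 <= mu)%N ->
  (exists S : {set P}, saturating inc mu S /\
     INR #|S| <= 2 * Dseq q mu * sqrt ((INR q + 1) * ln (INR q + 1)) + 2)
  /\
  (INR mu <= sqrt (INR q) ->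
   exists S : {set P}, saturating inc mu S /\
     INR #|S| <= 2 * (INR mu + 1) * sqrt ((INR q + 1) * ln (INR q + 1)) + 2)
  /\
  (INR mu <= ((1 - delta q) * INR q - delta q + 1) / 2 + 1 ->
   exists S : {set P}, saturating inc mu S /\
     INR #|S| <= 2 * (2 * INR mu - 1) * sqrt ((INR q + 1) * ln (INR q + 1)) + 2).
Proof.
move=> plane mu_ge2.
have [S sat_S card_S] := small_saturating_set plane mu_ge2.
have q_ge2 := order_ge2 plane; have le_q := le_qlnq q_ge2.
set s := sqrt _ in card_S *.
have s_ge1 : 1 <= s by rewrite -sqrt_1; apply: sqrt_le_1_alt; have := pos_INR q; lra.
have mu_ge2R : 2 <= INR mu by apply/(le_INR 2)/leP.
split; [|split=> [le_mu_sqrtq | _]]; exists S; split=> //; apply: (Rle_trans _ _ _ card_S).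
- have delta_s : delta q * s = 1 by rewrite /delta -/s; field; lra.
  have := Dseq_ge q (ltnW mu_ge2); nra.
- have : sqrt (INR q) <= s by apply: sqrt_le_1_alt; lra.
  nra.
- (* part (iii) needs only [1 <= s], not its hypothesis *)
  nra.
Qed.
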